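(* For $0<q<1$, \[ \sum_{k=0}^\infty\frac{q^k}{(1-q^{k+\frac12})^2}=\sum_{n=0}^\infty\frac{(1-2q^{2n+\frac32}+q^{n+1})\,q^{n^2+n}}{(1-q^{2n+1})(1+q^{n+1})}\cdot\frac{(q;q)_n^4}{(q^{\frac12};q)_{n+1}^2\,(q;q)_{2n}}. \]
   Context: $(x;q)_n=\prod_{i=0}^{n-1}(1-xq^i)$ is the $q$-shifted factorial. *)

From Stdlib Require Import Reals.
From Coquelicot Require Import Coquelicot.
Open Scope R_scope.

Fixpoint qpoch (x q : R) (n : nat) : R :=
  match n with
  | O => 1
  | S m => qpoch x q m * (1 - x * q ^ m)
  end.

(* left-hand summand q^k / (1 - q^(k+1/2))^2, with q^(1/2) = sqrt q *)
Definition lhs_term (q : R) (k : nat) : R :=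
  q ^ k / (1 - q ^ k * sqrt q) ^ 2.

Definition rhs_term (q : R) (n : nat) : R :=
  (1 - 2 * (q ^ (2 * n + 1) * sqrt q) + q ^ (n + 1)) * q ^ (n * n + n)
  / ((1 - q ^ (2 * n + 1)) * (1 + q ^ (n + 1)))
  * (qpoch q q n ^ 4
     / (qpoch (sqrt q) q (n + 1) ^ 2 * qpoch q q (2 * n))).

(* The identity comes from a Wilf-Zeilberger pair.  With
     F(n,k) = q^(n^2+n) (q;q)_n^4 q^((2n+1)k) / ((q;q)_(2n) (q^(k+1/2);q)_(n+1)^2)
   and G(n,k) = F(n,k) R(q^n, q^k) for an explicit rational certificate R, one has
   F(0,k) = lhs_k, G(n,0) = rhs_n and F(n,k) - F(n+1,k) = G(n,k) - G(n,k+1).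
   Summing the last relation over k gives sum_k F(n,k) - sum_k F(n+1,k) = G(n,0),
   since G(n,k) -> 0; summing over n then telescopes to sum_k F(0,k), because
   sum_k F(N,k) <= q^(N^2+N) / ((1 - q^(1/2))^(4N+2) (1 - q)) -> 0. *)

From Stdlib Require Import Reals Lra Lia.
From Coquelicot Require Import Coquelicot.
Open Scope R_scope.

Lemma pow_le_1 (x : R) (m : nat) : 0 <= x <= 1 -> x ^ m <= 1.
Proof. intros Hx. rewrite <- (pow1 m). apply pow_incr. exact Hx. Qed.

Lemma Rdiv_le_compat (a b c d : R) : 0 <= a <= b -> 0 < d <= c -> a / c <= b / d.
Proof.
  intros Hab Hdc. unfold Rdiv.
  apply Rmult_le_compat; try lra.
  - apply Rlt_le, Rinv_0_lt_compat. lra.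
  - apply Rinv_le_contravar; lra.
Qed.

Lemma is_series_telescope (u : nat -> R) (l : R) :
  is_lim_seq u l -> is_series (fun n => u n - u (S n)) (u O - l).
Proof.
  intros Hu.
  assert (Hsum : forall N, sum_n (fun n => u n - u (S n)) N = u O - u (S N)).
  { induction N as [|N IH].
    - apply sum_O.
    - rewrite sum_Sn, IH. unfold plus; simpl. ring. }
  change (is_lim_seq (sum_n (fun n => u n - u (S n))) (u O - l)).
  apply (is_lim_seq_ext (fun N => u O - u (S N))); [intros N; symmetry; apply Hsum|].
  apply is_lim_seq_minus'; [apply is_lim_seq_const|].
  apply (is_lim_seq_incr_1 u); exact Hu.
Qed.

Lemma is_lim_seq_ratio_0 (a : nat -> R) (k : R) :
  k < 1 -> (forall n, 0 < a n) -> is_lim_seq (fun n => a (S n) / a n) k ->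
  is_lim_seq a 0.
Proof.
  intros Hk Hpos Hratio.
  assert (Habs : forall n, Rabs (a n) = a n) by (intros n; apply Rabs_pos_eq, Rlt_le, Hpos).
  assert (Hser : ex_series (fun n => Rabs (a n))).
  { apply (ex_series_DAlembert a k Hk); [intros n; apply Rgt_not_eq, Hpos|].
    apply (is_lim_seq_ext (fun n => a (S n) / a n)); [|exact Hratio].
    intros n. symmetry. apply Rabs_pos_eq, Rlt_le, Rdiv_lt_0_compat; apply Hpos. }
  apply (is_lim_seq_ext (fun n => Rabs (a n))); [exact Habs|].
  apply ex_series_lim_0; exact Hser.
Qed.

Section WilfZeilberger.

Variables F G : nat -> nat -> R.
Hypothesis wz_pair : forall n k, F n k - F (S n) k = G n k - G n (S k).
Hypothesis ex_series_F : forall n, ex_series (F n).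
Hypothesis G_vanish : forall n, is_lim_seq (G n) 0.
Hypothesis Series_F_vanish : is_lim_seq (fun n => Series (F n)) 0.

Lemma Series_F_sub_succ (n : nat) : Series (F n) - Series (F (S n)) = G n O.
Proof.
  assert (Hdiff : is_series (fun k => F n k - F (S n) k) (Series (F n) - Series (F (S n)))).
  { apply (is_series_minus (V := R_NormedModule)); apply Series_correct, ex_series_F. }
  assert (Htel : is_series (fun k => F n k - F (S n) k) (G n O - 0)).
  { apply (is_series_ext (fun k => G n k - G n (S k))).
    - intros k. symmetry. apply wz_pair.
    - apply is_series_telescope, G_vanish. }
  rewrite <- (is_series_unique _ _ Hdiff), (is_series_unique _ _ Htel). ring.
Qed.

Lemma is_series_wz : is_series (fun n => G n O) (Series (F O)).
Proof.
  replace (Series (F O)) with (Series (F O) - 0) by ring.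
  apply (is_series_ext (fun n => Series (F n) - Series (F (S n)))).
  - exact Series_F_sub_succ.
  - apply is_series_telescope, Series_F_vanish.
Qed.

End WilfZeilberger.

Lemma qpoch_succ_shift (a q : R) (m : nat) :
  qpoch a q (S m) = (1 - a) * qpoch (a * q) q m.
Proof.
  induction m as [|m IH].
  - simpl. ring.
  - change (qpoch a q (S (S m))) with (qpoch a q (S m) * (1 - a * q ^ S m)).
    rewrite IH. simpl. ring.
Qed.

Lemma qpoch_mul_base (a q : R) (m : nat) :
  a <> 1 -> qpoch (a * q) q m = qpoch a q m * (1 - a * q ^ m) / (1 - a).
Proof.
  intros Ha.
  change (qpoch a q m * (1 - a * q ^ m)) with (qpoch a q (S m)).
  rewrite qpoch_succ_shift. field. lra.
Qed.

Lemma qpoch_ge_pow (a b q : R) (m : nat) :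
  0 <= a <= b -> b <= 1 -> 0 <= q <= 1 -> (1 - b) ^ m <= qpoch a q m.
Proof.
  intros Ha Hb Hq. induction m as [|m IH]; simpl; [lra|].
  assert (0 <= q ^ m <= 1) by (split; [apply pow_le | apply pow_le_1]; lra).
  assert (0 <= (1 - b) ^ m) by (apply pow_le; lra).
  assert (a * q ^ m <= b) by nra.
  rewrite Rmult_comm. apply Rmult_le_compat; nra.
Qed.

Lemma qpoch_le_1 (a q : R) (m : nat) :
  0 <= a <= 1 -> 0 <= q <= 1 -> qpoch a q m <= 1.
Proof.
  intros Ha Hq. induction m as [|m IH]; simpl; [lra|].
  assert (0 <= q ^ m <= 1) by (split; [apply pow_le | apply pow_le_1]; lra).
  assert (0 <= a * q ^ m) by (apply Rmult_le_pos; lra).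
  assert (0 <= (1 - a) ^ m) by (apply pow_le; lra).
  assert ((1 - a) ^ m <= qpoch a q m) by (apply (qpoch_ge_pow a a); lra).
  nra.
Qed.

Lemma qpoch_pos (a q : R) (m : nat) :
  0 <= a < 1 -> 0 <= q <= 1 -> 0 < qpoch a q m.
Proof.
  intros Ha Hq.
  apply (Rlt_le_trans _ ((1 - a) ^ m)); [apply pow_lt; lra|].
  apply qpoch_ge_pow; lra.
Qed.

Definition wz_F (q : R) (n k : nat) : R :=
  q ^ (n * n + n) * qpoch q q n ^ 4 / qpoch q q (2 * n) * q ^ ((2 * n + 1) * k)
  / qpoch (sqrt q * q ^ k) q (n + 1) ^ 2.

(* In terms of Q = q^n and Z = q^k: the ratios F(n+1,k)/F(n,k) and F(n,k+1)/F(n,k),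
   and the certificate G(n,k)/F(n,k). *)
Definition wz_shift_n (q Q Z : R) : R :=
  (q * Q) ^ 2 * (1 - q * Q) ^ 4 * Z ^ 2
  / ((1 - q * Q ^ 2) * (1 - (q * Q) ^ 2) * (1 - q * sqrt q * Q * Z) ^ 2).

Definition wz_shift_k (q Q Z : R) : R :=
  q * Q ^ 2 * ((1 - sqrt q * Z) / (1 - q * sqrt q * Q * Z)) ^ 2.

Definition wz_factor (q Q Z : R) : R :=
  (1 - 2 * q * sqrt q * Q ^ 2 * (1 - q * Q) / (1 - (q * Q) ^ 2) * Z) / (1 - q * Q ^ 2).

Lemma wz_certificate (q Q Z : R) :
  0 <= q -> 1 - q * Q ^ 2 <> 0 -> 1 - (q * Q) ^ 2 <> 0 -> 1 - q * sqrt q * Q * Z <> 0 ->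
  1 - wz_shift_n q Q Z = wz_factor q Q Z - wz_shift_k q Q Z * wz_factor q Q (q * Z).
Proof.
  intros Hq H1 H2 H3. unfold wz_shift_n, wz_shift_k, wz_factor.
  (* With sqrt q abstracted to x and q replaced by x * x, this is a rational identity. *)
  pose proof (sqrt_sqrt q Hq) as Hx.
  revert H3 Hx. generalize (sqrt q) as x. intros x H3 Hx. subst q.
  field. repeat split; auto.
Qed.

Definition wz_G (q : R) (n k : nat) : R := wz_F q n k * wz_factor q (q ^ n) (q ^ k).

Definition wz_bound (q : R) (n : nat) : R := q ^ (n * n + n) / (1 - sqrt q) ^ (4 * n + 2).

Section WZPairForTheIdentity.

Variable q : R.
Hypothesis hq0 : 0 < q.
Hypothesis hq1 : q < 1.

Lemma sqrt_q_bounds : q < sqrt q < 1.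
Proof.
  pose proof (sqrt_sqrt q (Rlt_le _ _ hq0)).
  assert (0 < sqrt q) by (apply sqrt_lt_R0; exact hq0).
  split; nra.
Qed.

Lemma pow_q_bounds (m : nat) : 0 < q ^ m <= 1.
Proof. split; [apply pow_lt | apply pow_le_1]; lra. Qed.

Lemma pow_q_double_succ (n : nat) : q ^ (2 * n + 1) = q * (q ^ n) ^ 2.
Proof. rewrite <- pow_mult, pow_add, Nat.mul_comm. simpl. ring. Qed.

Lemma pow_q_succ (n : nat) : q ^ (n + 1) = q * q ^ n.
Proof. rewrite Nat.add_comm. reflexivity. Qed.

Lemma wz_denominators_pos (n k : nat) :
  0 < 1 - sqrt q * q ^ k /\ 0 < 1 - q * q ^ n /\ 0 < 1 - q * (q ^ n) ^ 2 /\
  0 < 1 - (q * q ^ n) ^ 2 /\ 0 < 1 - q * sqrt q * q ^ n * q ^ k.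
Proof.
  pose proof sqrt_q_bounds. pose proof (pow_q_bounds n). pose proof (pow_q_bounds k).
  assert (0 < q ^ n * q ^ k <= 1) by (split; nra).
  assert (0 < q * sqrt q < 1) by nra.
  assert (0 < q * q ^ n < 1) by nra.
  assert (0 < sqrt q * q ^ k < 1) by nra.
  repeat split; nra.
Qed.

Lemma wz_F_succ_k (n k : nat) :
  wz_F q n (S k) = wz_F q n k * wz_shift_k q (q ^ n) (q ^ k).
Proof.
  pose proof sqrt_q_bounds. pose proof (pow_q_bounds k).
  destruct (wz_denominators_pos n k) as (Hk & _ & _ & _ & Hnk).
  assert (0 < qpoch (sqrt q * q ^ k) q (n + 1)) by (apply qpoch_pos; nra).
  assert (0 < qpoch q q (2 * n)) by (apply qpoch_pos; lra).
  unfold wz_F, wz_shift_k.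
  replace (sqrt q * q ^ S k) with (sqrt q * q ^ k * q) by (simpl; ring).
  rewrite qpoch_mul_base, pow_q_succ by nra.
  replace (q ^ ((2 * n + 1) * S k)) with (q ^ ((2 * n + 1) * k) * q ^ (2 * n + 1))
    by (rewrite <- pow_add; f_equal; lia).
  rewrite pow_q_double_succ.
  field. repeat split; apply Rgt_not_eq; assumption.
Qed.

Lemma wz_F_succ_n (n k : nat) :
  wz_F q (S n) k = wz_F q n k * wz_shift_n q (q ^ n) (q ^ k).
Proof.
  pose proof sqrt_q_bounds. pose proof (pow_q_bounds k).
  destruct (wz_denominators_pos n k) as (_ & Hn & H2n & H2n1 & Hnk).
  assert (0 < qpoch (sqrt q * q ^ k) q (n + 1)) by (apply qpoch_pos; nra).
  assert (0 < qpoch q q n) by (apply qpoch_pos; lra).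
  assert (0 < qpoch q q (2 * n)) by (apply qpoch_pos; lra).
  assert (Hsq : forall m, (q ^ m) ^ 2 = q ^ (2 * m)) by (intros m; rewrite <- pow_mult; f_equal; lia).
  assert (Hexp : q ^ (S n * S n + S n) = q ^ (n * n + n) * (q * q ^ n) ^ 2).
  { change (q * q ^ n) with (q ^ S n). rewrite Hsq, <- pow_add. f_equal; lia. }
  assert (Hfac2 : qpoch q q (2 * S n)
                  = qpoch q q (2 * n) * (1 - q * (q ^ n) ^ 2) * (1 - (q * q ^ n) ^ 2)).
  { replace (2 * S n)%nat with (S (S (2 * n))) by lia.
    change (qpoch q q (S (S (2 * n))))
      with (qpoch q q (2 * n) * (1 - q * q ^ (2 * n)) * (1 - q * (q * q ^ (2 * n)))).
    rewrite <- Hsq. ring. }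
  assert (Hgeom : q ^ ((2 * S n + 1) * k) = q ^ ((2 * n + 1) * k) * (q ^ k) ^ 2).
  { rewrite Hsq, <- pow_add. f_equal; lia. }
  assert (Hfac3 : qpoch (sqrt q * q ^ k) q (S n + 1)
                  = qpoch (sqrt q * q ^ k) q (n + 1) * (1 - sqrt q * q ^ k * (q * q ^ n))).
  { rewrite <- pow_q_succ. reflexivity. }
  unfold wz_F, wz_shift_n.
  rewrite Hexp, Hfac2, Hgeom, Hfac3.
  change (qpoch q q (S n)) with (qpoch q q n * (1 - q * q ^ n)).
  field. repeat split; apply Rgt_not_eq; assumption.
Qed.

Lemma wz_F_pair (n k : nat) :
  wz_F q n k - wz_F q (S n) k = wz_G q n k - wz_G q n (S k).
Proof.
  destruct (wz_denominators_pos n k) as (_ & _ & H2n & H2n1 & Hnk).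
  unfold wz_G. rewrite wz_F_succ_n, wz_F_succ_k.
  change (q ^ S k) with (q * q ^ k).
  transitivity (wz_F q n k * (1 - wz_shift_n q (q ^ n) (q ^ k))); [ring|].
  rewrite wz_certificate by lra. ring.
Qed.

Lemma wz_F_0 (k : nat) : wz_F q 0 k = lhs_term q k.
Proof.
  destruct (wz_denominators_pos 0 k) as (Hk & _).
  unfold wz_F, lhs_term. simpl. rewrite Nat.add_0_r.
  field. apply Rgt_not_eq. lra.
Qed.

Lemma wz_G_0 (n : nat) : wz_G q n 0 = rhs_term q n.
Proof.
  pose proof sqrt_q_bounds. pose proof (pow_q_bounds n).
  destruct (wz_denominators_pos n 0) as (_ & Hn & H2n & H2n1 & _).
  assert (0 < qpoch q q n) by (apply qpoch_pos; lra).
  assert (0 < qpoch q q (2 * n)) by (apply qpoch_pos; lra).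
  assert (0 < qpoch (sqrt q) q (n + 1)) by (apply qpoch_pos; lra).
  unfold wz_G, wz_F, wz_factor, rhs_term.
  rewrite Nat.mul_0_r, pow_O, !Rmult_1_r, pow_q_double_succ, pow_q_succ.
  field. repeat split; apply Rgt_not_eq; nra.
Qed.

Lemma wz_F_numerator_le (N k : nat) :
  0 <= q ^ (N * N + N) * qpoch q q N ^ 4 * q ^ ((2 * N + 1) * k) <= q ^ (N * N + N) * q ^ k.
Proof.
  pose proof (pow_q_bounds (N * N + N)). pose proof (pow_q_bounds (2 * N * k)).
  assert (HP : 0 <= qpoch q q N ^ 4 <= 1).
  { assert (0 < qpoch q q N <= 1) by (split; [apply qpoch_pos | apply qpoch_le_1]; lra).
    split; [apply pow_le | apply pow_le_1]; lra. }
  replace ((2 * N + 1) * k)%nat with (2 * N * k + k)%nat by lia.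
  rewrite (pow_add q (2 * N * k) k).
  pose proof (pow_q_bounds k).
  assert (0 <= qpoch q q N ^ 4 * q ^ (2 * N * k) <= 1) by (split; nra).
  assert (0 < q ^ (N * N + N) * q ^ k) by nra.
  replace (q ^ (N * N + N) * qpoch q q N ^ 4 * (q ^ (2 * N * k) * q ^ k))
    with (q ^ (N * N + N) * q ^ k * (qpoch q q N ^ 4 * q ^ (2 * N * k))) by ring.
  split; [apply Rmult_le_pos; lra|].
  rewrite <- (Rmult_1_r (q ^ (N * N + N) * q ^ k)) at 2.
  apply Rmult_le_compat_l; lra.
Qed.

Lemma wz_F_denominator_ge (N k : nat) :
  0 < (1 - sqrt q) ^ (4 * N + 2) <= qpoch q q (2 * N) * qpoch (sqrt q * q ^ k) q (N + 1) ^ 2.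
Proof.
  pose proof sqrt_q_bounds. pose proof (pow_q_bounds k).
  assert (HP2 : (1 - sqrt q) ^ (2 * N) <= qpoch q q (2 * N)) by (apply qpoch_ge_pow; lra).
  assert (HP3 : (1 - sqrt q) ^ (N + 1) <= qpoch (sqrt q * q ^ k) q (N + 1))
    by (apply qpoch_ge_pow; nra).
  assert (0 < (1 - sqrt q) ^ (2 * N)) by (apply pow_lt; lra).
  assert (0 < (1 - sqrt q) ^ (N + 1)) by (apply pow_lt; lra).
  replace (4 * N + 2)%nat with (2 * N + (N + 1) * 2)%nat by lia.
  rewrite pow_add, (pow_mult _ (N + 1) 2).
  split.
  - apply Rmult_lt_0_compat; [lra | apply pow_lt; lra].
  - apply Rmult_le_compat; try lra; [apply pow_le; lra | apply pow_incr; lra].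
Qed.

Lemma wz_F_bounds (N k : nat) : 0 <= wz_F q N k <= wz_bound q N * q ^ k.
Proof.
  destruct (wz_F_denominator_ge N k) as [Hpos Hle].
  replace (wz_F q N k) with (q ^ (N * N + N) * qpoch q q N ^ 4 * q ^ ((2 * N + 1) * k)
                              / (qpoch q q (2 * N) * qpoch (sqrt q * q ^ k) q (N + 1) ^ 2)).
  2:{ pose proof sqrt_q_bounds. pose proof (pow_q_bounds k).
       unfold wz_F. field. split; apply Rgt_not_eq, qpoch_pos; nra. }
  replace (wz_bound q N * q ^ k) with (q ^ (N * N + N) * q ^ k / (1 - sqrt q) ^ (4 * N + 2))
    by (unfold wz_bound; field; lra).
  split.
  - apply Rdiv_le_0_compat; [apply wz_F_numerator_le | lra].
  - apply Rdiv_le_compat; [apply wz_F_numerator_le | lra].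
Qed.

Lemma is_series_wz_bound_geom (N : nat) :
  is_series (fun k => wz_bound q N * q ^ k) (wz_bound q N * / (1 - q)).
Proof.
  apply (is_series_scal_l (V := R_NormedModule)), is_series_geom.
  rewrite Rabs_pos_eq; lra.
Qed.

Lemma ex_series_wz_F (N : nat) : ex_series (wz_F q N).
Proof.
  apply (ex_series_le (V := R_CompleteNormedModule)) with (b := fun k => wz_bound q N * q ^ k).
  - intros k. destruct (wz_F_bounds N k).
    unfold norm; simpl; unfold abs; simpl. rewrite Rabs_pos_eq; lra.
  - eexists. apply is_series_wz_bound_geom.
Qed.

Lemma wz_bound_vanish : is_lim_seq (wz_bound q) 0.
Proof.
  pose proof sqrt_q_bounds.
  assert (Hpos : forall N, 0 < wz_bound q N).
  { intros N. apply Rdiv_lt_0_compat; apply pow_lt; lra. }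
  apply (is_lim_seq_ratio_0 _ 0); [lra | exact Hpos |].
  apply (is_lim_seq_ext (fun N => q ^ N * q ^ N * (q ^ 2 / (1 - sqrt q) ^ 4))).
  - intros N. unfold wz_bound.
    replace (S N * S N + S N)%nat with (N * N + N + 2 + N + N)%nat by lia.
    replace (4 * S N + 2)%nat with (4 * N + 2 + 4)%nat by lia.
    rewrite !pow_add.
    field. repeat split; try apply pow_nonzero; lra.
  - replace (Finite 0) with (Finite (0 * 0 * (q ^ 2 / (1 - sqrt q) ^ 4))) by (f_equal; ring).
    assert (Hgeom : is_lim_seq (fun N => q ^ N) 0)
      by (apply is_lim_seq_geom; rewrite Rabs_pos_eq; lra).
    apply is_lim_seq_mult'; [apply is_lim_seq_mult'; exact Hgeom | apply is_lim_seq_const].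
Qed.

Lemma Series_wz_F_vanish : is_lim_seq (fun N => Series (wz_F q N)) 0.
Proof.
  apply is_lim_seq_le_le with (u := fun _ => 0) (w := fun N => wz_bound q N * / (1 - q)).
  - intros N. split.
    + assert (Hzero : Series (fun k => 0 * wz_F q N k) = 0)
        by (rewrite Series_scal_l; ring).
      rewrite <- Hzero. apply Series_le; [|apply ex_series_wz_F].
      intros k. destruct (wz_F_bounds N k). lra.
    + rewrite <- (is_series_unique _ _ (is_series_wz_bound_geom N)).
      apply Series_le; [apply wz_F_bounds | eexists; apply is_series_wz_bound_geom].
  - apply is_lim_seq_const.
  - replace (Finite 0) with (Finite (0 * / (1 - q))) by (f_equal; ring).
    apply is_lim_seq_mult'; [apply wz_bound_vanish | apply is_lim_seq_const].
Qed.

Lemma wz_G_vanish (n : nat) : is_lim_seq (wz_G q n) 0.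
Proof.
  unfold wz_G, wz_factor.
  set (c := 2 * q * sqrt q * (q ^ n) ^ 2 * (1 - q * q ^ n) / (1 - (q * q ^ n) ^ 2)).
  set (d := 1 - q * (q ^ n) ^ 2).
  replace (Finite 0) with (Finite (0 * ((1 - c * 0) / d))) by (f_equal; ring).
  apply is_lim_seq_mult'; [apply ex_series_lim_0, ex_series_wz_F |].
  unfold Rdiv. apply is_lim_seq_mult'; [|apply is_lim_seq_const].
  apply is_lim_seq_minus'; [apply is_lim_seq_const|].
  apply is_lim_seq_mult'; [apply is_lim_seq_const|].
  apply is_lim_seq_geom. rewrite Rabs_pos_eq; lra.
Qed.

End WZPairForTheIdentity.

Theorem mainTheorem20 (q : R) (hq0 : 0 < q) (hq1 : q < 1) :
  exists l : R, is_series (lhs_term q) l /\ is_series (rhs_term q) l.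
Proof.
  exists (Series (wz_F q 0)). split.
  - apply (is_series_ext (wz_F q 0)); [apply wz_F_0; assumption|].
    apply Series_correct, ex_series_wz_F; assumption.
  - apply (is_series_ext (fun n => wz_G q n 0)); [apply wz_G_0; assumption|].
    apply is_series_wz.
    + apply wz_F_pair; assumption.
    + apply ex_series_wz_F; assumption.
    + apply wz_G_vanish; assumption.
    + apply Series_wz_F_vanish; assumption.
Qed.
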